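(* The group $\Phi_L$, viewed as a subgroup of ${\rm PGL}_3(\mathbb{Q}_2)$, is torsion-free.
   Context: Let $\mathcal{O}$ be the ring of integers of $\mathbb{Q}(\sqrt{-7})$, $\Gamma_L$ the unitary group of the standard Hermitian lattice $\mathcal{O}[\tfrac12]^3$ (standard Hermitian form $\sum x_i\bar y_i$), and $P\Gamma_L$ its quotient by scalars; a fixed embedding $\mathcal{O}\to\mathbb{Z}_2$ identifies $P\Gamma_L$ with a lattice in ${\rm PGL}_3(\mathbb{Q}_2)$. With $\theta=\sqrt{-7}$, the Hermitian form induces a nondegenerate symmetric bilinear form on $\mathcal{O}[\tfrac12]^3/\theta\mathcal{O}[\tfrac12]^3\cong\mathbb{F}_7^3$, yielding a homomorphism $\Gamma_L\to{\rm O}_3(7)$ and hence $P\Gamma_L\to{\rm PO}_3(7)\cong{\rm PGL}_2(7)$. $\Phi_L$ is the kernel of this homomorphism $P\Gamma_L\to{\rm PGL}_2(7)$. *)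

(* Model Q(sqrt -7) inside the algebraic complex numbers algC. *)
From mathcomp Require Import all_boot all_order all_algebra all_field.
Set Implicit Arguments. Unset Strict Implicit. Unset Printing Implicit Defensive.
Import Order.TTheory GRing.Theory Num.Theory.
Local Open Scope ring_scope.

(* theta = sqrt(-7) (either square root gives the same ring O[1/2]). *)
Definition theta : algC := sqrtC (- 7%:R).

Definition dyadic (x : algC) : Prop :=
  exists (m : int) (k : nat), x = m%:~R / 2%:R ^+ k.

(* O[1/2] = Z[1/2] + Z[1/2] theta, where O is the ring of integers of Q(sqrt -7)
   (O = Z[(1+theta)/2], so O[1/2] = Z[1/2][theta]). *)
Definition in_O2 (x : algC) : Prop :=
  exists a b : algC, [/\ dyadic a, dyadic b & x = a + b * theta].

Definition ctrmx (g : 'M[algC]_3) : 'M[algC]_3 := \matrix_(i, j) (g j i)^*.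

(* Gamma_L : unitary group of the standard Hermitian lattice O[1/2]^3 *)
Definition in_GammaL (g : 'M[algC]_3) : Prop :=
  (forall i j, in_O2 (g i j)) /\ g *m ctrmx g = 1%:M.

Definition congr_theta (x y : algC) : Prop :=
  exists z, in_O2 z /\ x - y = theta * z.

(* g in Gamma_L represents an element of Phi_L: its reduction mod theta in
   O_3(7) is a scalar, i.e. +I or -I (trivial image in PO_3(7) = PGL_2(7)). *)
Definition lifts_PhiL (g : 'M[algC]_3) : Prop :=
  in_GammaL g /\
  exists s : bool, forall i j : 'I_3,
      congr_theta (g i j) ((-1) ^+ s * (i == j)%:R).

(* g represents the identity of P Gamma_L (= Gamma_L / scalars) *)
Definition is_scalar (g : 'M[algC]_3) : Prop := exists c : algC, g = c%:M.

(* Only the congruence g = +-1 (mod theta) is used, not unitarity.  Suppose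
   g = d + theta^k A with d a unit mod theta, k >= 1, and g^n scalar.  Expanding
   g^n, the linear term n d^(n-1) theta^k A is, for 7 not dividing n, the only
   one not divisible by theta^(k+1); for n = 7 it is theta^(k+2) times a unit and
   the others are divisible by theta^(k+3), since 7 = -theta^2 divides the middle
   binomial coefficients.  Either way A is scalar mod theta, so g is congruent to
   a scalar modulo every power of theta, hence is scalar: O[1/2] is theta-adically
   separated, as the norm of theta^k z is 7^k times a dyadic number.  A general n
   is reduced to these cases by induction, through g^7. *)

From mathcomp Require Import all_boot all_order all_algebra all_field.
From mathcomp Require Import ring zify.
Import GRing.Theory Num.Theory.
Set Implicit Arguments. Unset Strict Implicit.
Local Open Scope ring_scope.

Lemma theta_sqr : theta ^+ 2 = - 7%:R.
Proof. by rewrite /theta sqrtCK. Qed.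

Lemma theta_neq0 : theta != 0.
Proof.
apply/eqP => theta0; move: theta_sqr; rewrite theta0 expr0n => /eqP.
by rewrite eq_sym oppr_eq0 pnatr_eq0.
Qed.

Lemma conj_theta : theta^* = - theta.
Proof.
have norm_theta : theta * theta^* = 7%:R.
  by rewrite -normCK -normrX theta_sqr normrN normr_nat.
by apply: (mulfI theta_neq0); rewrite norm_theta mulrN -expr2 theta_sqr opprK.
Qed.

Lemma two_expr_neq0 k : (2%:R : algC) ^+ k != 0.
Proof. by rewrite expf_neq0 // pnatr_eq0. Qed.

Lemma dyadic_nat m : dyadic m%:R.
Proof. by exists m%:Z, 0%N; rewrite expr0 divr1. Qed.

Lemma dyadicD x y : dyadic x -> dyadic y -> dyadic (x + y).
Proof.
move=> [a [k ->]] [b [l ->]]; exists (a * 2 ^+ l + b * 2 ^+ k), (k + l)%N.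
rewrite intrD !intrM !rmorphXn /= exprD.
by field; rewrite !two_expr_neq0.
Qed.

Lemma dyadicM x y : dyadic x -> dyadic y -> dyadic (x * y).
Proof.
move=> [a [k ->]] [b [l ->]]; exists (a * b), (k + l)%N.
by rewrite intrM exprD; field; rewrite !two_expr_neq0.
Qed.

Lemma dyadicN x : dyadic x -> dyadic (- x).
Proof. by move=> [a [k ->]]; exists (- a), k; rewrite intrN mulNr. Qed.

Lemma dyadic_conj x : dyadic x -> x^* = x.
Proof.
by move=> [a [k ->]]; apply: conj_Creal; rewrite realM ?realV ?realX ?realz ?realn.
Qed.

(* A dyadic number divisible by every power of 7 vanishes: compare the 7-adic
   valuations of the integer numerators. *)
Lemma dyadic_dvd7_eq0 x : dyadic x ->
  (forall k, exists2 u, dyadic u & x = 7%:R ^+ k * u) -> x = 0.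
Proof.
move=> [a [j ->]] dvd7; have [a0 | a_neq0] := eqVneq a 0; first by rewrite a0 mul0r.
have [_ [b [i ->]] eq_ab] := dvd7 `|a|%N.
have eq_int : (a * 2 ^+ i)%:~R = ((7 ^+ `|a|%N * b * 2 ^+ j)%:~R : algC).
  rewrite !intrM !rmorphXn /=.
  have -> : (a%:~R : algC) = a%:~R / 2%:R ^+ j * 2%:R ^+ j by rewrite divfK ?two_expr_neq0.
  by rewrite eq_ab; field; rewrite !two_expr_neq0.
move/intr_inj/(congr1 absz): eq_int; rewrite !abszM !abszX /= => eq_abs.
have : (7 ^ `|a| %| `|a| * 2 ^ i)%N by rewrite eq_abs -mulnA dvdn_mulr.
rewrite Gauss_dvdl ?coprimeXl ?coprimeXr // => /dvdn_leq.
by rewrite absz_gt0 a_neq0 leqNgt ltn_expl // => /(_ isT).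
Qed.

Lemma O2_nat m : in_O2 m%:R.
Proof.
by exists m%:R, 0; split; [exact: dyadic_nat | exact: (dyadic_nat 0) | rewrite mul0r addr0].
Qed.

Lemma O2_theta : in_O2 theta.
Proof.
by exists 0, 1; split; [exact: (dyadic_nat 0) | exact: (dyadic_nat 1) | rewrite add0r mul1r].
Qed.

Lemma O2D x y : in_O2 x -> in_O2 y -> in_O2 (x + y).
Proof.
move=> [a [b [a_d b_d ->]]] [a' [b' [a'_d b'_d ->]]].
by exists (a + a'), (b + b'); split; [exact: dyadicD | exact: dyadicD | ring].
Qed.

Lemma O2N x : in_O2 x -> in_O2 (- x).
Proof. by move=> [a [b [a_d b_d ->]]]; exists (- a), (- b); split; [exact: dyadicN | exact: dyadicN | ring]. Qed.

Lemma O2B x y : in_O2 x -> in_O2 y -> in_O2 (x - y).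
Proof. by move=> x_O2 y_O2; apply: O2D => //; apply: O2N. Qed.

Lemma O2M x y : in_O2 x -> in_O2 y -> in_O2 (x * y).
Proof.
move=> [a [b [a_d b_d ->]]] [a' [b' [a'_d b'_d ->]]].
exists (a * a' - 7%:R * (b * b')), (a * b' + b * a'); split.
- apply: dyadicD; first exact: dyadicM.
  by apply/dyadicN/dyadicM; [exact: dyadic_nat | exact: dyadicM].
- by apply: dyadicD; apply: dyadicM.
- by rewrite -[7%:R]opprK -theta_sqr; ring.
Qed.

Lemma O2X x k : in_O2 x -> in_O2 (x ^+ k).
Proof. by move=> x_O2; elim: k => [|k IHk]; [exact: (O2_nat 1) | rewrite exprS; exact: O2M]. Qed.

Lemma O2Mn x k : in_O2 x -> in_O2 (x *+ k).
Proof. by move=> x_O2; rewrite -mulr_natr; apply: O2M => //; apply: O2_nat. Qed.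

Lemma O2_norm x : in_O2 x -> dyadic (x * x^*).
Proof.
move=> [a [b [a_d b_d ->]]].
rewrite rmorphD rmorphM /= conj_theta !dyadic_conj //.
have -> : (a + b * theta) * (a + b * - theta) = a * a + 7%:R * (b * b).
  by rewrite -[7%:R]opprK -theta_sqr; ring.
by apply: dyadicD; [exact: dyadicM | apply/dyadicM/dyadicM; first exact: dyadic_nat].
Qed.

Definition tdvd (k : nat) (x : algC) : Prop := exists2 z, in_O2 z & x = theta ^+ k * z.

Lemma tdvd_O2 k x : tdvd k x -> in_O2 x.
Proof. by move=> [z z_O2 ->]; apply: O2M => //; apply/O2X/O2_theta. Qed.

Lemma O2_tdvd0 x : in_O2 x -> tdvd 0 x.
Proof. by exists x; rewrite ?mul1r. Qed.

Lemma tdvd_thetaX k x : in_O2 x -> tdvd k (theta ^+ k * x).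
Proof. by exists x. Qed.

Lemma tdvd0 k : tdvd k 0.
Proof. by exists 0; [exact: (O2_nat 0) | rewrite mulr0]. Qed.

Lemma tdvdD k x y : tdvd k x -> tdvd k y -> tdvd k (x + y).
Proof. by move=> [z z_O2 ->] [z' z'_O2 ->]; exists (z + z'); [exact: O2D | rewrite mulrDr]. Qed.

Lemma tdvdN k x : tdvd k x -> tdvd k (- x).
Proof. by move=> [z z_O2 ->]; exists (- z); [exact: O2N | rewrite mulrN]. Qed.

Lemma tdvdB k x y : tdvd k x -> tdvd k y -> tdvd k (x - y).
Proof. by move=> x_dvd y_dvd; apply: tdvdD => //; apply: tdvdN. Qed.

Lemma tdvdMr k x y : in_O2 x -> tdvd k y -> tdvd k (x * y).
Proof. by move=> x_O2 [z z_O2 ->]; exists (x * z); [exact: O2M | rewrite mulrCA]. Qed.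

Lemma tdvdMl k x y : tdvd k x -> in_O2 y -> tdvd k (x * y).
Proof. by move=> x_dvd y_O2; rewrite mulrC; apply: tdvdMr. Qed.

Lemma tdvdM j k x y : tdvd j x -> tdvd k y -> tdvd (j + k) (x * y).
Proof.
move=> [z z_O2 ->] [z' z'_O2 ->]; exists (z * z'); first exact: O2M.
by rewrite exprD; ring.
Qed.

Lemma tdvdW j k x : (j <= k)%N -> tdvd k x -> tdvd j x.
Proof.
move=> le_jk [z z_O2 ->]; exists (theta ^+ (k - j) * z).
  by apply: O2M => //; apply/O2X/O2_theta.
by rewrite mulrA -exprD subnKC.
Qed.

Lemma tdvd_thetaXM j k x : tdvd k x -> tdvd (j + k) (theta ^+ j * x).
Proof. by move=> [z z_O2 ->]; rewrite mulrA -exprD; apply: tdvd_thetaX. Qed.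

Lemma tdvd_thetaXK j k x : tdvd (j + k) (theta ^+ j * x) -> tdvd k x.
Proof.
move=> [z z_O2]; rewrite exprD -mulrA => /(mulfI (expf_neq0 j theta_neq0)) ->.
exact: tdvd_thetaX.
Qed.

Lemma tdvd_sum k (I : finType) (F : I -> algC) :
  (forall i, tdvd k (F i)) -> tdvd k (\sum_i F i).
Proof. by move=> F_dvd; apply: big_ind => //; [apply: tdvd0 | apply: tdvdD]. Qed.

Lemma tdvdMn k x l : tdvd k x -> tdvd k (x *+ l).
Proof. by move=> x_dvd; rewrite -mulr_natr; apply: tdvdMl => //; apply: O2_nat. Qed.

Lemma tdvdMn7 k x : tdvd k x -> tdvd (2 + k) (x *+ 7).
Proof.
move=> x_dvd; have := tdvdM (tdvd_thetaX 2 (O2N (O2_nat 1))) x_dvd.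
by rewrite theta_sqr mulrN1 opprK mulr_natl.
Qed.

Lemma tdvd_all_eq0 x : (forall k, tdvd k x) -> x = 0.
Proof.
move=> x_dvd; have x_O2 : in_O2 x by apply: (@tdvd_O2 0).
suff /eqP : x * x^* = 0 by rewrite mul_conjC_eq0 => /eqP.
apply: dyadic_dvd7_eq0; first exact: O2_norm.
move=> k; have [z z_O2 ->] := x_dvd k; exists (z * z^*); first exact: O2_norm.
rewrite rmorphM rmorphXn /= conj_theta.
have -> : 7%:R = theta * - theta by rewrite mulrN -expr2 theta_sqr opprK.
by rewrite exprMn; ring.
Qed.

Definition theta_unit (d : algC) : Prop :=
  in_O2 d /\ exists2 e, in_O2 e & tdvd 1 (d * e - 1).

Lemma theta_unit1 : theta_unit 1.
Proof.
split; first exact: (O2_nat 1).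
by exists 1; [exact: (O2_nat 1) | rewrite mulr1 subrr; apply: tdvd0].
Qed.

Lemma theta_unitN d : theta_unit d -> theta_unit (- d).
Proof.
move=> [d_O2 [e e_O2 de1]]; split; first exact: O2N.
by exists (- e); [exact: O2N | rewrite mulrNN].
Qed.

Lemma theta_unitM d d' : theta_unit d -> theta_unit d' -> theta_unit (d * d').
Proof.
move=> [d_O2 [e e_O2 de1]] [d'_O2 [e' e'_O2 de'1]]; split; first exact: O2M.
exists (e * e'); first exact: O2M.
have -> : d * d' * (e * e') - 1 = (d * e - 1) * (d' * e') + (d' * e' - 1) by ring.
by apply: tdvdD => //; apply: tdvdMl => //; apply: O2M.
Qed.

Lemma theta_unitX d k : theta_unit d -> theta_unit (d ^+ k).
Proof.
move=> d_unit; elim: k => [|k IHk]; first exact: theta_unit1.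
by rewrite exprS; apply: theta_unitM.
Qed.

Lemma theta_unit_nat l : ~~ (7 %| l)%N -> theta_unit l%:R.
Proof.
move=> l_ndvd7; split; first exact: O2_nat.
have [a _] := @Bezoutl 7 l isT.
have -> : gcdn 7 l = 1%N by apply/eqP; rewrite -/(coprime 7 l) prime_coprime.
move=> /dvdnP [q /(congr1 (fun t => t%:R : algC))]; rewrite !natrD !natrM => eq_q.
exists (- a%:R); first exact/O2N/O2_nat.
apply: (@tdvdW 1 2) => //; rewrite (_ : _ - 1 = theta ^+ 2 * q%:R).
  exact/tdvd_thetaX/O2_nat.
by rewrite theta_sqr mulNr [7%:R * _]mulrC -eq_q; ring.
Qed.

Lemma theta_unit_congr d y : theta_unit d -> tdvd 1 (y - d) -> theta_unit y.
Proof.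
move=> [d_O2 [e e_O2 de1]] yd_dvd; split.
  by rewrite -(subrK d y); apply: O2D => //; apply: (tdvd_O2 yd_dvd).
exists e => //; have -> : y * e - 1 = (d * e - 1) + (y - d) * e by ring.
by apply: tdvdD => //; apply: tdvdMl.
Qed.

Lemma theta_unit_tdvdKl d x : theta_unit d -> in_O2 x -> tdvd 1 (d * x) -> tdvd 1 x.
Proof.
move=> [d_O2 [e e_O2 de1]] x_O2 dx_dvd.
have -> : x = e * (d * x) - (d * e - 1) * x by ring.
by apply: tdvdB; [apply: tdvdMr | apply: tdvdMl].
Qed.

Lemma exprD_sub_linear (R : pzRingType) (x y : R) n : GRing.comm x y ->
  (x + y) ^+ n.+1 - x ^+ n.+1 - x ^+ n * y *+ n.+1 =
  \sum_(i < n) x ^+ (n - i.+1) * y ^+ i.+2 *+ 'C(n.+1, i.+2).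
Proof.
move=> xy; rewrite exprDn_comm // 2!big_ord_recl /= subn0 subn1 expr0 mulr1 bin0 bin1.
by rewrite mulr1n expr1 [_ + (_ + _)]addrC addrK addrC addKr.
Qed.

Section ThetaAdicMatrices.

Variable m : nat.
Local Notation mx := 'M[algC]_m.+1.

Definition mxO2 (M : mx) : Prop := forall i j, in_O2 (M i j).

Definition mxtdvd (k : nat) (M : mx) : Prop := forall i j, tdvd k (M i j).

Lemma mxtdvd_O2 k M : mxtdvd k M -> mxO2 M.
Proof. by move=> M_dvd i j; apply: (tdvd_O2 (M_dvd i j)). Qed.

Lemma mxO2_tdvd0 M : mxO2 M -> mxtdvd 0 M.
Proof. by move=> M_O2 i j; apply: O2_tdvd0. Qed.

Lemma mxO2_scalar c : in_O2 c -> mxO2 c%:M.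
Proof. by move=> c_O2 i j; rewrite mxE; apply: O2Mn. Qed.

Lemma mxO2D M N : mxO2 M -> mxO2 N -> mxO2 (M + N).
Proof. by move=> M_O2 N_O2 i j; rewrite mxE; apply: O2D. Qed.

Lemma mxO2M M N : mxO2 M -> mxO2 N -> mxO2 (M * N).
Proof.
move=> M_O2 N_O2 i j; rewrite -mulmxE mxE.
by apply: big_ind => [|x y|l _]; [exact: (O2_nat 0) | exact: O2D | exact: O2M].
Qed.

Lemma mxO2X M e : mxO2 M -> mxO2 (M ^+ e).
Proof.
move=> M_O2; elim: e => [|e IHe]; last by rewrite exprS; apply: mxO2M.
by rewrite expr0; apply/mxO2_scalar/(O2_nat 1).
Qed.

Lemma mxtdvdD k M N : mxtdvd k M -> mxtdvd k N -> mxtdvd k (M + N).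
Proof. by move=> M_dvd N_dvd i j; rewrite mxE; apply: tdvdD. Qed.

Lemma mxtdvd_sum k (I : finType) (F : I -> mx) :
  (forall i, mxtdvd k (F i)) -> mxtdvd k (\sum_i F i).
Proof.
move=> F_dvd; apply: big_ind => //; last exact: mxtdvdD.
by move=> i j; rewrite mxE; apply: tdvd0.
Qed.

Lemma mxtdvdM j k M N : mxtdvd j M -> mxtdvd k N -> mxtdvd (j + k) (M * N).
Proof.
move=> M_dvd N_dvd i l; rewrite -mulmxE mxE.
by apply: tdvd_sum => r; apply: tdvdM.
Qed.

Lemma mxtdvdMl k M N : mxtdvd k M -> mxO2 N -> mxtdvd k (M * N).
Proof. by move=> M_dvd /mxO2_tdvd0 N_dvd; rewrite -[k]addn0; apply: mxtdvdM. Qed.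

Lemma mxtdvdMr k M N : mxO2 M -> mxtdvd k N -> mxtdvd k (M * N).
Proof. by move=> /mxO2_tdvd0 M_dvd N_dvd; rewrite -[k]add0n; apply: mxtdvdM. Qed.

Lemma mxtdvdX k M e : mxtdvd k M -> mxtdvd (e * k) (M ^+ e).
Proof.
move=> M_dvd; elim: e => [|e IHe]; last by rewrite exprS mulSn; apply: mxtdvdM.
by rewrite expr0; apply/mxO2_tdvd0/mxO2_scalar/(O2_nat 1).
Qed.

Lemma mxtdvdW j k M : (j <= k)%N -> mxtdvd k M -> mxtdvd j M.
Proof. by move=> le_jk M_dvd i l; apply: tdvdW (M_dvd i l). Qed.

Lemma mxtdvdZ k c M : in_O2 c -> mxtdvd k M -> mxtdvd k (c *: M).
Proof. by move=> c_O2 M_dvd i j; rewrite mxE; apply: tdvdMr. Qed.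

Lemma mxtdvdMn k M l : mxtdvd k M -> mxtdvd k (M *+ l).
Proof. by move=> M_dvd i j; rewrite mulmxnE; apply: tdvdMn. Qed.

Lemma mxtdvdMn7 k M : mxtdvd k M -> mxtdvd (2 + k) (M *+ 7).
Proof. by move=> M_dvd i j; rewrite mulmxnE; apply: tdvdMn7. Qed.

Lemma mxtdvdP k M : mxtdvd k M <-> exists2 A, mxO2 A & M = theta ^+ k *: A.
Proof.
split=> [M_dvd | [A A_O2 ->] i j]; last by rewrite mxE; apply: tdvd_thetaX.
have thetaX_neq0 : theta ^+ k != 0 by apply: expf_neq0 theta_neq0.
exists ((theta ^+ k)^-1 *: M); last by rewrite scalerA divff // scale1r.
by move=> i j; rewrite mxE; have [z z_O2 ->] := M_dvd i j; rewrite mulKf.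
Qed.

Lemma mxtdvd_exp_congr k g d e : in_O2 d -> mxtdvd k (g - d%:M) ->
  mxtdvd k (g ^+ e - (d ^+ e)%:M).
Proof.
move=> d_O2 gd_dvd; have g_O2 : mxO2 g.
  by rewrite -(subrK d%:M g); apply: mxO2D; [apply: mxtdvd_O2 gd_dvd | apply: mxO2_scalar].
elim: e => [|e IHe]; first by move=> i j; rewrite subrr mxE; apply: tdvd0.
have -> : g ^+ e.+1 - (d ^+ e.+1)%:M =
          (g - d%:M) * g ^+ e + d%:M * (g ^+ e - (d ^+ e)%:M).
  by rewrite !exprS scalar_mxM mulmxE mulrBl mulrBr addrA subrK.
apply: mxtdvdD; first by apply: mxtdvdMl => //; apply: mxO2X.
by apply: mxtdvdMr => //; apply: mxO2_scalar.
Qed.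

Lemma scalar_binom_rem d h n :
  (d%:M + h) ^+ n.+1 - (d ^+ n.+1)%:M - (d ^+ n *+ n.+1) *: h =
  \sum_(i < n) (d ^+ (n - i.+1) *: h ^+ i.+2) *+ 'C(n.+1, i.+2) :> mx.
Proof.
have scalar_mxX e : (d ^+ e)%:M = d%:M ^+ e :> mx by rewrite rmorphXn.
rewrite -scalerMnl -mul_scalar_mx mulmxE !scalar_mxX exprD_sub_linear.
  by apply: eq_bigr => i _; rewrite -mul_scalar_mx mulmxE scalar_mxX.
by rewrite /GRing.comm -!mulmxE scalar_mxC.
Qed.

Lemma mxtdvd_binom_rem k d h n : in_O2 d -> mxtdvd k h ->
  mxtdvd (k + k) ((d%:M + h) ^+ n.+1 - (d ^+ n.+1)%:M - (d ^+ n *+ n.+1) *: h).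
Proof.
move=> d_O2 h_dvd; rewrite scalar_binom_rem; apply: mxtdvd_sum => i.
apply/mxtdvdMn/mxtdvdZ; first exact: O2X.
by apply: mxtdvdW (mxtdvdX i.+2 h_dvd); rewrite !mulSn; lia.
Qed.

(* For the exponent 7 the linear term is only divisible by [theta^(k+2)], but so
   are all the others: [7] divides the middle binomial coefficients. *)
Lemma mxtdvd_binom_rem7 k d h : (0 < k)%N -> in_O2 d -> mxtdvd k h ->
  mxtdvd (k + 3) ((d%:M + h) ^+ 7 - (d ^+ 7)%:M - (d ^+ 6 *+ 7) *: h).
Proof.
move=> k_gt0 d_O2 h_dvd; rewrite scalar_binom_rem; apply: mxtdvd_sum => i.
have term_dvd : mxtdvd (i.+2 * k) (d ^+ (6 - i.+1) *: h ^+ i.+2).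
  by apply: mxtdvdZ; [apply: O2X | apply: mxtdvdX].
have [lt_i5 | ge_i5] := ltnP i 5.
  have /dvdnP [q ->] : (7 %| 'C(7, i.+2))%N by apply: prime_dvd_bin => //; apply/andP; split => //; lia.
  by rewrite mulrnA; apply: mxtdvdW (mxtdvdMn7 (mxtdvdMn q term_dvd)); rewrite !mulSn; lia.
have i5 : nat_of_ord i = 5%N by have := ltn_ord i; lia.
by apply/mxtdvdMn/(mxtdvdW _ term_dvd); rewrite i5; lia.
Qed.

(* Hensel-type lifting: when the linear term of the expansion of [g^n] is
   [theta^v] times a unit, [g = d mod theta^k] improves to a congruence
   modulo [theta^(k+1)]. *)
Lemma mxtdvd_lift k v (g : mx) d c u : theta_unit u -> mxtdvd k (g - d%:M) ->
  mxtdvd (k + v).+1 (c%:M - (theta ^+ v * u) *: (g - d%:M)) ->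
  exists2 d', tdvd k (d' - d) & mxtdvd k.+1 (g - d'%:M).
Proof.
move=> u_unit /mxtdvdP [A A_O2 def_h] lin_dvd.
have entry_dvd i j :
    tdvd (k + v).+1 (c *+ (i == j) - theta ^+ (k + v) * (u * A i j)).
  rewrite (_ : theta ^+ (k + v) * _ = theta ^+ v * u * (theta ^+ k * A i j)).
    by have := lin_dvd i j; rewrite def_h !mxE.
  by rewrite exprD; ring.
have unit_cancel w : in_O2 w ->
    tdvd (k + v).+1 (theta ^+ (k + v) * (u * w)) -> tdvd 1 w.
  by move=> w_O2; rewrite -addn1 => /tdvd_thetaXK; apply: theta_unit_tdvdKl.
have offdiag_dvd i j : i != j -> tdvd 1 (A i j).
  move=> neq_ij; apply: unit_cancel (A_O2 i j) _.
  by have := tdvdN (entry_dvd i j); rewrite (negbTE neq_ij) sub0r opprK.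
have diag_dvd i j : tdvd 1 (A i i - A j j).
  apply: unit_cancel; first exact: O2B.
  suff -> : theta ^+ (k + v) * (u * (A i i - A j j)) =
      c *+ (j == j) - theta ^+ (k + v) * (u * A j j) -
      (c *+ (i == i) - theta ^+ (k + v) * (u * A i i)) by apply: tdvdB.
  by rewrite !eqxx mulr1n; ring.
have def_g i j : g i j = d *+ (i == j) + theta ^+ k * A i j.
  by have /matrixP/(_ i j) := def_h; rewrite !mxE => <-; rewrite subrKC.
exists (d + theta ^+ k * A 0 0); first by rewrite addrC addKr; apply: tdvd_thetaX.
move=> i j; rewrite !mxE def_g -addn1; case: (eqVneq i j) => [<- | neq_ij].
  by rewrite !mulr1n opprD addrACA subrr add0r -mulrBr; apply/tdvd_thetaXM/diag_dvd.
by rewrite !mulr0n add0r subr0; apply/tdvd_thetaXM/offdiag_dvd.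
Qed.

Lemma mxtdvd_all_scalar (g : mx) :
  (forall k, exists d, mxtdvd k (g - d%:M)) -> is_scalar_mx g.
Proof.
move=> g_congr; apply/is_scalar_mxP; exists (g 0 0); apply/matrixP => i j.
rewrite mxE; apply/eqP; rewrite -subr_eq0; apply/eqP/tdvd_all_eq0 => k.
have [d gd_dvd] := g_congr k; have := tdvdB (gd_dvd i j) (tdvdMn (i == j) (gd_dvd 0 0)).
by rewrite !mxE eqxx mulr1n mulrnBl opprB addrA subrK.
Qed.

Lemma scalar_of_lift (g : mx) d : theta_unit d -> mxtdvd 1 (g - d%:M) ->
  (forall k d, (0 < k)%N -> theta_unit d -> mxtdvd k (g - d%:M) ->
     exists2 d', tdvd k (d' - d) & mxtdvd k.+1 (g - d'%:M)) ->
  is_scalar_mx g.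
Proof.
move=> d_unit gd_dvd lift; apply: mxtdvd_all_scalar.
suff congr k : exists2 d', theta_unit d' & mxtdvd k.+1 (g - d'%:M).
  by move=> k; have [d' _ /(mxtdvdW (leqnSn k))] := congr k; exists d'.
elim: k => [|k [d' d'_unit gd'_dvd]]; first by exists d.
have [d'' d''d' gd''_dvd] := lift k.+1 d' isT d'_unit gd'_dvd.
by exists d'' => //; apply: theta_unit_congr d'_unit (tdvdW _ d''d').
Qed.

Lemma scalar_of_exp_coprime7 (g : mx) n c d : ~~ (7 %| n.+1)%N ->
  g ^+ n.+1 = c%:M -> theta_unit d -> mxtdvd 1 (g - d%:M) -> is_scalar_mx g.
Proof.
move=> n_coprime gn d_unit gd_dvd; apply: (scalar_of_lift d_unit gd_dvd).
move=> k d' k_gt0 d'_unit gd'_dvd.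
apply: (@mxtdvd_lift k 0 g d' (c - d' ^+ n.+1) (d' ^+ n *+ n.+1)) => //.
  by rewrite -mulr_natr; apply: theta_unitM; [apply: theta_unitX | apply: theta_unit_nat].
have := mxtdvd_binom_rem n (proj1 d'_unit) gd'_dvd; rewrite subrKC gn.
by move=> rem_dvd; rewrite expr0 mul1r [_%:M]raddfB; apply: mxtdvdW rem_dvd; lia.
Qed.

Lemma scalar_of_exp7 (g : mx) c d :
  g ^+ 7 = c%:M -> theta_unit d -> mxtdvd 1 (g - d%:M) -> is_scalar_mx g.
Proof.
move=> g7 d_unit gd_dvd; apply: (scalar_of_lift d_unit gd_dvd).
move=> k d' k_gt0 d'_unit gd'_dvd.
apply: (@mxtdvd_lift k 2 g d' (c - d' ^+ 7) (- d' ^+ 6)).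
- exact/theta_unitN/theta_unitX.
- exact: gd'_dvd.
have := mxtdvd_binom_rem7 k_gt0 (proj1 d'_unit) gd'_dvd; rewrite subrKC g7.
move=> rem_dvd; rewrite theta_sqr mulrN mulNr opprK mulr_natl [_%:M]raddfB.
by apply: mxtdvdW rem_dvd; lia.
Qed.

Lemma scalar_of_exp_scalar (g : mx) n d : (0 < n)%N -> is_scalar_mx (g ^+ n) ->
  theta_unit d -> mxtdvd 1 (g - d%:M) -> is_scalar_mx g.
Proof.
elim/ltn_ind: n g d => n IHn g d n_gt0 /is_scalar_mxP [c gn] d_unit gd_dvd.
have [/dvdnP [q def_n] | n_coprime] := boolP (7 %| n)%N; last first.
  case: n n_gt0 n_coprime gn {IHn} => // n _ n_coprime gn.
  exact: scalar_of_exp_coprime7 gn d_unit gd_dvd.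
have q_gt0 : (0 < q)%N by move: n_gt0; rewrite def_n muln_gt0 => /andP [].
have /is_scalar_mxP [c7 g7] : is_scalar_mx (g ^+ 7).
  apply: (IHn q _ _ (d ^+ 7) q_gt0); first by rewrite def_n; lia.
  - by apply/is_scalar_mxP; exists c; rewrite -exprM mulnC -def_n.
  - exact: theta_unitX.
  - by apply: mxtdvd_exp_congr gd_dvd; case: d_unit.
exact: scalar_of_exp7 g7 d_unit gd_dvd.
Qed.

End ThetaAdicMatrices.

Theorem lemma2p1 (g : 'M[algC]_3) (n : nat) :
  lifts_PhiL g -> (0 < n)%N -> is_scalar (g ^+ n) -> is_scalar g.
Proof.
move=> [_ [s g_congr]] n_gt0 /is_scalar_mxP gn_scalar; apply/is_scalar_mxP.
apply: (scalar_of_exp_scalar n_gt0 gn_scalar (theta_unitX s (theta_unitN theta_unit1))).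
move=> i j; have [z [z_O2 def_z]] := g_congr i j.
by exists z; rewrite // !mxE -mulr_natr def_z.
Qed.
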